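(* Proposition C implies each of Propositions A, B (each in its $\#$-decreasing and its lex $\#$-decreasing form), C and D. Proposition A for $\#$-decreasing is implied by each of these forms. Moreover each of these forms is equivalent to the corresponding form in which the bound $k^k$ is replaced by $\mathrm{ot}(k)$.
   Context: $\mathbb{N}=\{0,1,\dots\}$, $[n]=\{0,\dots,n-1\}$; for $x\in\mathbb{N}^k$, $\min(x),|x|$ are least and greatest coordinates. A function assignment for $S$ ($S=\mathbb{N}^k$ or $[n]^k$) assigns to each finite $A\subseteq S$ a function $U(A):A\to A$ (identified with its graph). Regressive value of $F$ on $B$: $y=F(x)$, $x\in B$, $|y|<\min(x)$. $\#$-decreasing: for all finite $A\subseteq S$, $x\in S$, either $U(A)\subseteq U(A\cup\{x\})$ or there is $y$ with $|y|>|x|$ and $|U(A)(y)|>|U(A\cup\{x\})(y)|$. Lex $\#$-decreasing: same with the comparisons replaced by strict lexicographic order: $y>_{\mathrm{lex}}x$ and $U(A)(y)>_{\mathrm{lex}}U(A\cup\{x\})(y)$. A strict order is transitive and irreflexive; $x\le_c y$ iff $x_i\le y_i$ for all $i$; a strict order $<$ on $S$ is upward iff $x\le_c y$ implies not $y<x$. For strict orders $<_1,<_2$, $U$ is $<_1,<_2$-$\#$-decreasing iff for all finite $A$, $x$: either $U(A)\subseteq U(A\cup\{x\})$ or there is $y>_1x$ with $U(A)(y)>_2U(A\cup\{x\})(y)$. Proposition A: for all $k,p>0$ and every $\#$-decreasing (resp. lex $\#$-decreasing) function assignment $U$ for $\mathbb{N}^k$ there exist finite $A\subseteq\mathbb{N}^k$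 and $E\subseteq\mathbb{N}$, $|E|=p$, $E^k\subseteq A$, such that $U(A)$ has at most $k^k$ regressive values on $E^k$. Proposition B: for all $k,p>0$ there is $m$ such that for all $n\ge m$ and every $\#$-decreasing (resp. lex $\#$-decreasing) function assignment $U$ for $[n]^k$ there exist $A\subseteq[n]^k$ and $E$, $|E|=p$, $E^k\subseteq A$, with $U(A)$ having at most $k^k$ regressive values on $E^k$. Proposition C: for all $k,p>0$, all upward orders $<_1,<_2$ on $\mathbb{N}^k$ and every $<_1,<_2$-$\#$-decreasing function assignment $U$ for $\mathbb{N}^k$, the conclusion of Proposition A holds. Proposition D: for all $k,p>0$ there is $m$ such that for all $n\ge m$, all upward orders $<_1,<_2$ on $[n]^k$ and every $<_1,<_2$-$\#$-decreasing function assignment for $[n]^k$, the conclusion of Proposition B holds. $\mathrm{ot}(k)$ is the number of order types of elements of $\mathbb{N}^k$ (where $x,y$ have the same order type iff $x_i<x_j\Leftrightarrow y_i<y_j$ for all $i,j$). *)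

From HB Require Import structures.
From mathcomp Require Import all_boot all_order.
From mathcomp Require Import finmap.
From mathcomp Require Import boolp.
Set Implicit Arguments. Unset Strict Implicit. Unset Printing Implicit Defensive.
Local Open Scope fset_scope.

(* |x| : greatest coordinate; min(x) : least coordinate (for k > 0). *)
Definition mxc k (x : k.-tuple nat) : nat := \max_(i < k) tnth x i.
Definition mnc k (x : k.-tuple nat) : nat := \big[minn/mxc x]_(i < k) tnth x i.

Definition inbox (n k : nat) : pred (k.-tuple nat) := fun x => [forall i, tnth x i < n].
Arguments inbox : clear implicits.

(* A function assignment: U A is a function whose restriction to A is U(A) : A -> A *)
Definition fasgn k := {fset k.-tuple nat} -> k.-tuple nat -> k.-tuple nat.

Definition is_fa k (S : pred (k.-tuple nat)) (U : fasgn k) : Prop :=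
  forall A : {fset k.-tuple nat}, {subset A <= S} ->
    forall y, y \in A -> U A y \in A.

Definition graph_sub k (U : fasgn k) (A : {fset k.-tuple nat}) (x : k.-tuple nat) : Prop :=
  forall y, y \in A -> U A y = U (x |` A) y.

(* <1,<2-#-decreasing (lt1 x y means x <1 y) *)
Definition ord_dec k (S : pred (k.-tuple nat)) (lt1 lt2 : rel (k.-tuple nat))
  (U : fasgn k) : Prop :=
  forall A : {fset k.-tuple nat}, {subset A <= S} -> forall x, x \in S ->
    graph_sub U A x \/
    exists2 y, y \in A & lt1 x y /\ lt2 (U (x |` A) y) (U A y).

(* comparison by greatest coordinate: used for #-decreasing *)
Definition hash_lt k : rel (k.-tuple nat) := fun x y => mxc x < mxc y.
Definition lex_lt k : rel (k.-tuple nat) := fun x y =>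
  [exists i : 'I_k, [forall j : 'I_k, (j < i) ==> (tnth x j == tnth y j)]
                    && (tnth x i < tnth y i)].

Definition cle k (x y : k.-tuple nat) : bool := [forall i, tnth x i <= tnth y i].
Definition strict_on k (S : pred (k.-tuple nat)) (r : rel (k.-tuple nat)) : Prop :=
  (forall x, x \in S -> ~~ r x x) /\
  (forall x y z, x \in S -> y \in S -> z \in S -> r x y -> r y z -> r x z).
Definition upward_on k (S : pred (k.-tuple nat)) (r : rel (k.-tuple nat)) : Prop :=
  strict_on S r /\ (forall x y, x \in S -> y \in S -> cle x y -> ~~ r y x).

Definition cube k (E : {fset nat}) (x : k.-tuple nat) : bool := [forall i, tnth x i \in E].

Definition regvals k (U : fasgn k) (A : {fset k.-tuple nat}) (E : {fset nat})
  : {fset k.-tuple nat} :=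
  [fset U A x | x in A & cube E x && (mxc (U A x) < mnc x)].

Definition concl k (p bnd : nat) (S : pred (k.-tuple nat)) (U : fasgn k) : Prop :=
  exists (A : {fset k.-tuple nat}) (E : {fset nat}),
    [/\ {subset A <= S}, #|` E| = p, (forall x, cube E x -> x \in A)
      & #|` regvals U A E| <= bnd].

Definition PropA (lt : forall k, rel (k.-tuple nat)) (b : nat -> nat) : Prop :=
  forall k p, 0 < k -> 0 < p -> forall U : fasgn k,
    is_fa predT U -> ord_dec predT (lt k) (lt k) U -> concl p (b k) predT U.

Definition PropB (lt : forall k, rel (k.-tuple nat)) (b : nat -> nat) : Prop :=
  forall k p, 0 < k -> 0 < p -> exists m, forall n, m <= n -> forall U : fasgn k,
    is_fa (inbox n k) U -> ord_dec (inbox n k) (lt k) (lt k) U ->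
    concl p (b k) (inbox n k) U.

Definition PropC (b : nat -> nat) : Prop :=
  forall k p, 0 < k -> 0 < p -> forall lt1 lt2 : rel (k.-tuple nat),
    upward_on predT lt1 -> upward_on predT lt2 -> forall U : fasgn k,
    is_fa predT U -> ord_dec predT lt1 lt2 U -> concl p (b k) predT U.

Definition PropD (b : nat -> nat) : Prop :=
  forall k p, 0 < k -> 0 < p -> exists m, forall n, m <= n ->
    forall lt1 lt2 : rel (k.-tuple nat),
    upward_on (inbox n k) lt1 -> upward_on (inbox n k) lt2 -> forall U : fasgn k,
    is_fa (inbox n k) U -> ord_dec (inbox n k) lt1 lt2 U ->
    concl p (b k) (inbox n k) U.

Definition kk (k : nat) : nat := k ^ k.

(* order type of x, as the table of comparisons x_i < x_j *)
Definition otype k (x : k.-tuple nat) : {ffun 'I_k * 'I_k -> bool} :=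
  [ffun ij => tnth x ij.1 < tnth x ij.2].
Definition ot (k : nat) : nat :=
  #|[set f : {ffun 'I_k * 'I_k -> bool} | `[< exists x : k.-tuple nat, f = otype x >]]|.

Arguments hash_lt : clear implicits.
Arguments lex_lt : clear implicits.

(* Compactness: a counterexample to Proposition D on boxes of unbounded size has, after
   passing to a subsequence on which every finite restriction stabilises, a limit that is a
   counterexample to Proposition C on N^k.  The orders #-comparison and strict
   lexicographic comparison are upward, so C and D specialise to A and B, and B restricts
   to A.  The map x |-> (|x|, x) from N^k to N^(k+1) turns a #-decreasing assignment into
   a lex #-decreasing one with the same regressive values, so lex-A gives #-A.
   Finally the canonical Ramsey theorem, applied to the colouring of E^k by the regressive
   value, shrinks E so that the regressive value depends only on the order type; this
   trades any bound, in particular k^k, for ot(k) <= k^k. *)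

From HB Require Import structures.
From mathcomp Require Import all_boot all_order.
From mathcomp Require Import finmap boolp zify.
From Stdlib Require Import ClassicalEpsilon.
Set Implicit Arguments. Unset Strict Implicit. Unset Printing Implicit Defensive.
Local Open Scope fset_scope.

(** * Upward orders and restriction *)

Lemma le_mxc k (x : k.-tuple nat) i : tnth x i <= mxc x.
Proof. exact: (leq_bigmax_cond (F := fun i => tnth x i)). Qed.

Lemma upward_hash_lt k S : upward_on S (hash_lt k).
Proof.
split; first split.
- by move=> x _; rewrite /hash_lt ltnn.
- by move=> x y z _ _ _; rewrite /hash_lt; apply: ltn_trans.
move=> x y _ _ /forallP le_xy; rewrite /hash_lt -leqNgt.
by apply/bigmax_leqP => i _; apply: leq_trans (le_xy i) (le_mxc y i).
Qed.

Lemma lex_ltP k (x y : k.-tuple nat) :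
  reflect (exists i : 'I_k,
             (forall j : 'I_k, j < i -> tnth x j = tnth y j) /\ tnth x i < tnth y i)
          (lex_lt k x y).
Proof.
apply: (iffP existsP) => [[i /andP[/forallP eq_pre lt_i]]|[i [eq_pre lt_i]]]; exists i.
  by split=> // j ji; apply/eqP; move: (eq_pre j); rewrite ji.
by rewrite lt_i andbT; apply/forallP => j; apply/implyP => ji; rewrite eq_pre.
Qed.

Lemma upward_lex_lt k S : upward_on S (lex_lt k).
Proof.
split; first split.
- by move=> x _; apply/lex_ltP => -[i [_]]; rewrite ltnn.
- move=> x y z _ _ _ /lex_ltP[i [eq_xy lt_xy]] /lex_ltP[i' [eq_yz lt_yz]].
  apply/lex_ltP; case: (ltngtP i i') => [ii'|i'i|/val_inj ii'].
  + exists i; split; last by rewrite -(eq_yz i ii').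
    by move=> j ji; rewrite eq_xy // eq_yz // (ltn_trans ji).
  + exists i'; split; last by rewrite (eq_xy i' i'i).
    by move=> j ji; rewrite eq_xy ?eq_yz // (ltn_trans ji).
  + subst i'; exists i; split; last exact: ltn_trans lt_xy lt_yz.
    by move=> j ji; rewrite eq_xy // eq_yz.
move=> x y _ _ /forallP le_xy; apply/negP => /lex_ltP[i [_ lt_yx]].
by move: (le_xy i); rewrite leqNgt lt_yx.
Qed.

Lemma concl_le k p b b' S (U : fasgn k) : b <= b' -> concl p b S U -> concl p b' S U.
Proof. by move=> le_b [A [E [? ? ? card_R]]]; exists A, E; split=> //; apply: leq_trans le_b. Qed.

Section Restriction.
Variables (k : nat) (S S' : pred (k.-tuple nat)).
Hypothesis sub_S : {subset S' <= S}.

Lemma is_fa_sub U : is_fa S U -> is_fa S' U.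
Proof. by move=> faU A AS'; apply: faU => z /AS' /sub_S. Qed.

Lemma ord_dec_sub lt1 lt2 U : ord_dec S lt1 lt2 U -> ord_dec S' lt1 lt2 U.
Proof. by move=> decU A AS' x /sub_S; apply: decU => z /AS' /sub_S. Qed.

Lemma upward_on_sub r : upward_on S r -> upward_on S' r.
Proof.
move=> [[irr tr] up]; split; first split.
- by move=> x /sub_S; apply: irr.
- by move=> x y z /sub_S xS /sub_S yS /sub_S zS; apply: tr.
by move=> x y /sub_S xS /sub_S yS; apply: up.
Qed.

Lemma concl_sub p b U : concl p b S' U -> concl p b S U.
Proof. by move=> [A [E [AS' ? ? ?]]]; exists A, E; split=> // x /AS' /sub_S. Qed.

End Restriction.

Lemma PropA_of_PropB lt b : PropB lt b -> PropA lt b.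
Proof.
move=> propB k p k0 p0 U faU decU; have [m Hm] := propB k p k0 p0.
apply: (@concl_sub _ predT (inbox m k) (fun _ _ => isT)); apply: Hm => //.
  exact: is_fa_sub faU.
exact: ord_dec_sub decU.
Qed.

Lemma PropC_of_PropD b : PropD b -> PropC b.
Proof.
move=> propD k p k0 p0 lt1 lt2 up1 up2 U faU decU; have [m Hm] := propD k p k0 p0.
apply: (@concl_sub _ predT (inbox m k) (fun _ _ => isT)); apply: Hm (leqnn m) _ _ _ _ _ _ _.
- exact: upward_on_sub up1.
- exact: upward_on_sub up2.
- exact: is_fa_sub faU.
- exact: ord_dec_sub decU.
Qed.

Lemma PropA_of_PropC lt b : (forall k, upward_on predT (lt k)) -> PropC b -> PropA lt b.
Proof. by move=> up propC k p k0 p0 U; apply: propC. Qed.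

Lemma PropB_of_PropD lt b :
  (forall k n, upward_on (inbox n k) (lt k)) -> PropD b -> PropB lt b.
Proof.
move=> up propD k p k0 p0; have [m Hm] := propD k p k0 p0.
by exists m => n mn U; apply: Hm.
Qed.

Section BoundMonotonicity.
Variables b b' : nat -> nat.
Hypothesis le_b : forall k, b k <= b' k.

Lemma PropA_le lt : PropA lt b -> PropA lt b'.
Proof. by move=> propA k p k0 p0 U faU decU; apply: concl_le (le_b k) _; apply: propA. Qed.

Lemma PropB_le lt : PropB lt b -> PropB lt b'.
Proof.
move=> propB k p k0 p0; have [m Hm] := propB k p k0 p0.
by exists m => n mn U faU decU; apply: concl_le (le_b k) _; apply: Hm.
Qed.

Lemma PropC_le : PropC b -> PropC b'.
Proof.
move=> propC k p k0 p0 lt1 lt2 up1 up2 U faU decU.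
exact: concl_le (le_b k) (propC k p k0 p0 lt1 lt2 up1 up2 U faU decU).
Qed.

Lemma PropD_le : PropD b -> PropD b'.
Proof.
move=> propD k p k0 p0; have [m Hm] := propD k p k0 p0.
exists m => n mn lt1 lt2 up1 up2 U faU decU.
exact: concl_le (le_b k) (Hm n mn lt1 lt2 up1 up2 U faU decU).
Qed.

End BoundMonotonicity.

(** * Order types *)

Definition rank_below k (x : k.-tuple nat) (i : 'I_k) := #|[set j | tnth x j < tnth x i]|.

Lemma rank_below_ltE k (x : k.-tuple nat) i j :
  (tnth x i < tnth x j) = (rank_below x i < rank_below x j).
Proof.
rewrite /rank_below; case: ltnP => h.
  apply/esym/proper_card/properP; split.
    by apply/subsetP => l; rewrite !inE => /ltn_trans; apply.
  by exists i; rewrite !inE ?ltnn.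
apply/esym/negbTE; rewrite -leqNgt; apply/subset_leq_card/subsetP => l.
by rewrite !inE => /leq_trans; apply.
Qed.

Lemma rank_below_lt k (x : k.-tuple nat) i : rank_below x i < k.
Proof.
rewrite -[k in _ < k]card_ord -cardsT; apply/proper_card/properP.
by split; [exact: subsetT | exists i; rewrite !inE ?ltnn].
Qed.

(* An order type is determined by the ranks [i |-> #{j | x_j < x_i}], a map ['I_k -> 'I_k]. *)
Lemma ot_leq_kk k : ot k <= kk k.
Proof.
case: k => [|k].
  by apply: leq_trans (max_card _) _; rewrite card_ffun card_prod card_ord card_bool.
pose ranks (f : {ffun 'I_k.+1 * 'I_k.+1 -> bool}) : {ffun 'I_k.+1 -> 'I_k.+1} :=
  [ffun i => inord #|[set j | f (j, i)]|].
have ranksE x i : val (ranks (otype x) i) = rank_below x i.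
  have card_E : #|[set j | otype x (j, i)]| = rank_below x i.
    by apply: eq_card => j; rewrite !inE ffunE.
  by rewrite ffunE /= card_E inordK ?rank_below_lt.
rewrite /ot /kk -(@card_in_imset _ _ ranks).
  by apply: leq_trans (max_card _) _; rewrite card_ffun !card_ord.
move=> f1 f2; rewrite !inE => /asboolP[x ->] /asboolP[y ->] eq_ranks.
apply/ffunP => -[i j]; rewrite !ffunE /= !rank_below_ltE -!ranksE.
by rewrite eq_ranks.
Qed.

(** * Ramsey's theorem *)

Lemma fsubset_card_eq (K : choiceType) (q : nat) (X : {fset K}) :
  q <= #|` X| -> exists2 Y, Y `<=` X & #|` Y| = q.
Proof.
elim: q => [|q IH] le_qX; first by exists fset0; rewrite ?fsub0set ?cardfs0.
have [Y YX card_Y] := IH (ltnW le_qX).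
have /fsubsetPn[x xX xY] : ~~ (X `<=` Y).
  by apply/negP => /fsubset_leq_card; rewrite card_Y; lia.
by exists (x |` Y); rewrite ?fsubUset ?fsub1set ?xX ?YX // cardfsU1 xY card_Y.
Qed.

Lemma fset_nat_min (X : {fset nat}) :
  X != fset0 -> exists2 a, a \in X & forall b, b \in X -> a <= b.
Proof.
case: (fset_0Vmem X) => [->|[x xX] _]; first by rewrite eqxx.
have exX : exists n, n \in X by exists x.
by case: (ex_minnP exX) => m mX min_m; exists m.
Qed.

Definition colours_below (d C : nat) (X : {fset nat}) (f : {fset nat} -> nat) :=
  forall S, S `<=` X -> #|` S| = d -> f S < C.

Definition homogeneous (d : nat) (Y : {fset nat}) (f : {fset nat} -> nat) (c : nat) :=
  forall S, S `<=` Y -> #|` S| = d -> f S = c.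

Definition ramsey_property d := forall C q, exists N, forall X : {fset nat}, N <= #|` X| ->
  forall f, colours_below d C X f ->
  exists2 Y, Y `<=` X /\ #|` Y| = q & exists c, homogeneous d Y f c.

Lemma colours_below_sub d C X Y f :
  Y `<=` X -> colours_below d C X f -> colours_below d C Y f.
Proof. by move=> YX colX S SY; apply: colX; apply: fsubset_trans YX. Qed.

Lemma pigeonhole (C q : nat) (Z : {fset nat}) (col : nat -> nat) :
  (forall z, z \in Z -> col z <= C) -> C.+1 * q <= #|` Z| ->
  exists c, q <= #|` [fset z in Z | col z == c]|.
Proof.
elim: C Z => [|C IH] Z col_le card_Z.
  exists 0; suff -> : [fset z in Z | col z == 0] = Z by lia.
  apply/fsetP => z; rewrite !inE; case zZ: (z \in Z) => //=.
  by rewrite -leqn0 col_le.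
set Zc := [fset z in Z | col z == C.+1].
case: (leqP q #|` Zc|) => [|lt_Zc]; first by exists C.+1.
have col_le' z : z \in Z `\` Zc -> col z <= C.
  rewrite !inE => /andP[not_Zc zZ]; move: not_Zc (col_le z zZ); rewrite zZ /=.
  by rewrite leq_eqVlt => /negPf->.
have Zc_sub : Zc `<=` Z by apply/fsubsetP => z; rewrite !inE => /andP[].
have [|c le_qc] := IH _ col_le'; first by rewrite cardfsDS //; lia.
exists c; apply: leq_trans le_qc (fsubset_leq_card _); apply/fsubsetP => z.
by rewrite !inE => /andP[/andP[_ ->] ->].
Qed.

Lemma end_homogeneous d : ramsey_property d -> forall C t, exists N,
  forall X : {fset nat}, N <= #|` X| -> forall f, colours_below d.+1 C X f ->
  exists Z (col : nat -> nat), [/\ Z `<=` X, #|` Z| = t, (forall z, z \in Z -> col z <= C) &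
    forall a S, a \in Z -> S `<=` Z -> (forall s, s \in S -> a < s) -> #|` S| = d ->
      f (a |` S) = col a].
Proof.
move=> ramsey_d C; elim=> [|t [Nt HNt]].
  exists 0 => X _ f _; exists fset0, (fun=> 0).
  by split; rewrite ?fsub0set ?cardfs0 // => ?; rewrite in_fset0.
have [N HN] := ramsey_d C Nt; exists N.+1 => X card_X f colX.
have [a0 a0X a0_min] : exists2 a0, a0 \in X & forall b, b \in X -> a0 <= b.
  by apply: fset_nat_min; rewrite -cardfs_gt0; lia.
set X' := X `\ a0.
have X'X : X' `<=` X by exact: fsubD1set.
have a0_notin S : S `<=` X' -> a0 \notin S.
  by move=> SX'; apply/negP => /(fsubsetP SX'); rewrite !inE eqxx.
have colX' : colours_below d C X' (fun S => f (a0 |` S)).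
  move=> S SX' card_S; apply: colX; last by rewrite cardfsU1 a0_notin ?card_S.
  by rewrite fsubUset fsub1set a0X (fsubset_trans SX').
have card_X' : N <= #|` X'| by move: card_X; rewrite (cardfsD1 a0 X) a0X.
have [Y0 [Y0X' card_Y0] [c0 hom_c0]] := HN X' card_X' _ colX'.
have [Z [col [ZY0 card_Z col_le end_hom]]] := HNt Y0 (eq_leq (esym card_Y0)) f
  (colours_below_sub (fsubset_trans Y0X' X'X) colX).
have ZX' : Z `<=` X' := fsubset_trans ZY0 Y0X'.
(* [c0] is arbitrary when [Y0] has no [d]-subset; [minn] keeps the colour of [a0] in range. *)
exists (a0 |` Z), (fun z => if z == a0 then minn c0 C else col z); split.
- by rewrite fsubUset fsub1set a0X (fsubset_trans ZX').
- by rewrite cardfsU1 (a0_notin _ ZX') card_Z.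
- move=> z; case: ifP => [_ _|/negbT z_ne]; first exact: geq_minr.
  by rewrite in_fset1U (negPf z_ne); apply: col_le.
move=> a S; rewrite in_fset1U => /orP[/eqP -> | aZ] SZ S_gt card_S.
  have SZ' : S `<=` Z.
    apply/fsubsetP => s sS; move/fsubsetP/(_ s sS): SZ; rewrite in_fset1U.
    by case/orP => // /eqP s_a0; move: (S_gt s sS); rewrite s_a0 ltnn.
  have SX' : S `<=` X' := fsubset_trans SZ' ZX'.
  rewrite eqxx -(hom_c0 S (fsubset_trans SZ' ZY0) card_S); apply/esym/minn_idPl/ltnW/colX.
    by rewrite fsubUset fsub1set a0X (fsubset_trans SX').
  by rewrite cardfsU1 (a0_notin _ SX') card_S.
have /[!inE] /andP[a_ne_a0 aX] := fsubsetP ZX' a aZ.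
rewrite (negPf a_ne_a0); apply: end_hom => //; apply/fsubsetP => s sS.
move/fsubsetP/(_ s sS): SZ; rewrite in_fset1U => /orP[/eqP s_a0|//].
by move: (S_gt s sS) (a0_min a aX); rewrite s_a0; lia.
Qed.

Theorem ramsey d : ramsey_property d.
Proof.
elim: d => [|d IHd] C q.
  exists q => X card_X f _; have [Y YX card_Y] := fsubset_card_eq card_X.
  by exists Y => //; exists (f fset0) => S _ /cardfs0_eq ->.
have [N HN] := end_homogeneous IHd C (C.+1 * q); exists N => X card_X f colX.
have [Z [col [ZX card_Z col_le end_hom]]] := HN X card_X f colX.
have [c le_q] := pigeonhole col_le (eq_leq (esym card_Z)).
have [W WZc card_W] := fsubset_card_eq le_q.
have WZ : W `<=` Z.
  by apply: fsubset_trans WZc _; apply/fsubsetP => z; rewrite !inE => /andP[].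
exists W; first by split=> //; exact: fsubset_trans WZ ZX.
exists c => S SW card_S.
have [b bS b_min] : exists2 b, b \in S & forall s, s \in S -> b <= s.
  by apply: fset_nat_min; rewrite -cardfs_gt0 card_S.
have /[!inE] /andP[_ /eqP <-] := fsubsetP WZc b (fsubsetP SW b bS).
rewrite -(fsetD1K bS) end_hom //.
- exact: fsubsetP WZ b (fsubsetP SW b bS).
- exact: fsubset_trans (fsubD1set _ _) (fsubset_trans SW WZ).
- by move=> s /[!inE] /andP[s_ne_b sS]; rewrite ltn_neqAle eq_sym s_ne_b b_min.
- by move: card_S; rewrite (cardfsD1 b S) bS; lia.
Qed.

Lemma ramsey_simultaneous (I : eqType) d C (s : seq I) q : exists N,
  forall X : {fset nat}, N <= #|` X| -> forall f : I -> {fset nat} -> nat,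
  (forall i, i \in s -> colours_below d C X (f i)) ->
  exists2 Y, Y `<=` X /\ #|` Y| = q & forall i, i \in s -> exists c, homogeneous d Y (f i) c.
Proof.
elim: s q => [|i s IH] q.
  exists q => X card_X f _; have [Y YX card_Y] := fsubset_card_eq card_X.
  by exists Y.
have [Nr HNr] := ramsey d C q; have [N HN] := IH Nr; exists N => X card_X f colX.
have [Y1 [Y1X card_Y1] hom1] : exists2 Y1, Y1 `<=` X /\ #|` Y1| = Nr &
    forall j, j \in s -> exists c, homogeneous d Y1 (f j) c.
  by apply: HN => // j js; apply: colX; rewrite inE js orbT.
have [Y [YY1 card_Y] [c hom_c]] :=
  HNr Y1 (eq_leq (esym card_Y1)) (f i) (colours_below_sub Y1X (colX i (mem_head i s))).
exists Y; first by split=> //; exact: fsubset_trans YY1 Y1X.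
move=> j /[!inE] /orP[/eqP-> | js]; first by exists c.
by have [c' hom_c'] := hom1 j js; exists c' => S SY; apply: hom_c'; apply: fsubset_trans YY1.
Qed.

(** * The canonical Ramsey theorem for order types *)

Lemma sorted_ltn_sort_fset (T : {fset nat}) : sorted ltn (sort leq T).
Proof. by rewrite ltn_sorted_uniq_leq sort_uniq fset_uniq sort_sorted //; exact: leq_total. Qed.

Lemma sort_fset_sorted (s : seq nat) : sorted ltn s -> sort leq [fset t in s] = s.
Proof.
move=> s_ltn; have /andP[s_uniq s_leq] : uniq s && sorted leq s by rewrite -ltn_sorted_uniq_leq.
apply: (@eq_trans _ _ (sort leq s)); last exact/sorted_sort/s_leq/leq_trans.
apply/perm_sortP; [exact: leq_total | exact: leq_trans | exact: anti_leq |].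
by apply: uniq_perm => //; [exact: fset_uniq | move=> t; rewrite inE].
Qed.

Lemma index_sorted_ltn (s : seq nat) a :
  sorted ltn s -> a \in s -> index a s = count (fun t => t < a) s.
Proof.
elim: s => [//|b s IH] /= s_ltn; rewrite inE.
have /andP[b_lt s_ltn'] : all (fun t => b < t) s && sorted ltn s.
  by rewrite -(path_sortedE ltn_trans).
case: (a =P b) => [-> _|a_ne_b aS].
  rewrite eqxx ltnn /=; apply/esym/eqP; rewrite -leqn0 leqNgt -has_count.
  by apply/hasP => -[t ts]; rewrite ltnNge ltnW // (allP b_lt t ts).
by rewrite eq_sym (introF eqP a_ne_b) IH // (allP b_lt a aS).
Qed.

Lemma size_undup_map_eq (T U V : eqType) (f : T -> U) (g : T -> V) (s : seq T) :
  {in s &, forall a b, (f a == f b) = (g a == g b)} ->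
  size (undup (map f s)) = size (undup (map g s)).
Proof.
elim: s => [//|a s IH] eq_fg /=.
have {}IH : size (undup (map f s)) = size (undup (map g s)).
  by apply: IH => u v us vs; apply: eq_fg; rewrite inE ?us ?vs orbT.
have -> : (f a \in map f s) = (g a \in map g s).
  apply/mapP/mapP => -[b bs e]; exists b => //; apply/eqP.
    by rewrite -eq_fg ?inE ?bs ?eqxx ?orbT // e.
  by rewrite eq_fg ?inE ?bs ?eqxx ?orbT // e.
by case: ifP => _ /=; rewrite IH.
Qed.

Section OrderPatterns.
Variable k : nat.
Implicit Types (x y : k.-tuple nat) (s : {ffun 'I_k -> 'I_k}).

Definition pattern_tuple s (T : {fset nat}) : k.-tuple nat :=
  [tuple nth 0 (sort leq T) (s i) | i < k].

Definition value_rank x (i : 'I_k) := size (undup [seq v <- x | v < tnth x i]).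

Definition pattern x : {ffun 'I_k -> 'I_k} := [ffun i => insubd i (value_rank x i)].

Lemma otype_ltE x y : otype x = otype y ->
  forall a b, (tnth x a < tnth x b) = (tnth y a < tnth y b).
Proof. by move/ffunP=> eq_xy a b; move: (eq_xy (a, b)); rewrite !ffunE. Qed.

Lemma pattern_otype x y : otype x = otype y -> pattern x = pattern y.
Proof.
move=> /otype_ltE eq_lt; apply/ffunP => i; rewrite !ffunE; congr insubd.
rewrite /value_rank -(map_tnth_enum x) -(map_tnth_enum y) !filter_map.
under eq_filter do rewrite /= eq_lt.
have eq_tnth (z : k.-tuple nat) a b :
    (tnth z a == tnth z b) = ~~ (tnth z a < tnth z b) && ~~ (tnth z b < tnth z a).
  by rewrite -!leqNgt andbC eqn_leq.
by apply: size_undup_map_eq => a b _ _; rewrite !eq_tnth !eq_lt.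
Qed.

Section Support.
Variables (x : k.-tuple nat) (tail : seq nat).
Hypotheses (tail_ltn : sorted ltn tail) (tail_size : k <= size tail)
  (x_lt_tail : forall v t, v \in x -> t \in tail -> v < t).

Definition support := sort leq (undup x) ++ take (k - size (undup x)) tail.

Definition support_set := [fset t in support].

Lemma support_ltn : sorted ltn support.
Proof.
have vals_ltn : sorted ltn (sort leq (undup x)).
  by rewrite ltn_sorted_uniq_leq sort_uniq undup_uniq sort_sorted //; exact: leq_total.
have pad_ltn : sorted ltn (take (k - size (undup x)) tail).
  by apply: subseq_sorted tail_ltn; [exact: ltn_trans | exact: take_subseq].
rewrite /support (sorted_pairwise ltn_trans) pairwise_cat.
rewrite -!(sorted_pairwise ltn_trans) vals_ltn pad_ltn !andbT.
by apply/allrelP => a b; rewrite mem_sort mem_undup => ax /mem_take; apply: x_lt_tail.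
Qed.

Lemma size_support : size support = k.
Proof.
have size_vals : size (undup x) <= k by rewrite -[k in _ <= k](size_tuple x) size_undup.
by rewrite size_cat size_sort size_takel ?subnKC //; lia.
Qed.

Lemma card_support_set : #|` support_set| = k.
Proof.
rewrite card_fseq undup_id ?size_support //.
exact: sorted_uniq ltn_trans ltnn _ support_ltn.
Qed.

Lemma in_support_set v : v \in support_set -> v \in x \/ v \in tail.
Proof. by rewrite in_fset mem_cat mem_sort mem_undup => /orP[|/mem_take]; [left|right]. Qed.

Lemma index_support i : index (tnth x i) support = value_rank x i.
Proof.
have xi : tnth x i \in sort leq (undup x) by rewrite mem_sort mem_undup mem_tnth.
rewrite /support index_cat xi index_sorted_ltn //.
  by rewrite count_sort -size_filter filter_undup.
by rewrite ltn_sorted_uniq_leq sort_uniq undup_uniq sort_sorted //; exact: leq_total.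
Qed.

Lemma pattern_tuple_support : pattern_tuple (pattern x) support_set = x.
Proof.
have xi_in i : tnth x i \in support by rewrite mem_cat mem_sort mem_undup mem_tnth.
have rank_lt i : value_rank x i < k.
  by rewrite -index_support -[k in _ < k]size_support index_mem.
apply: eq_from_tnth => i; rewrite tnth_mktuple sort_fset_sorted ?support_ltn //.
by rewrite ffunE val_insubd rank_lt -index_support nth_index.
Qed.

End Support.

(* Each [x] in [E^k] is [pattern_tuple (pattern x) T] for a [k]-subset [T] of [Y] (its values
   completed from above), so the colour of [x] is the colour of [T] for the pattern of [x]. *)
Lemma ramsey_order_type c p : exists P, forall E' : {fset nat}, P <= #|` E'| ->
  forall chi : k.-tuple nat -> nat, (forall x, cube E' x -> chi x < c) ->
  exists2 E, E `<=` E' /\ #|` E| = p &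
    forall x y, cube E x -> cube E y -> otype x = otype y -> chi x = chi y.
Proof.
have [N HN] := ramsey_simultaneous k c (enum {ffun 'I_k -> 'I_k}) (p + k).
exists N => E' card_E' chi chi_lt.
have [|Y [YE' card_Y] hom] := HN E' card_E' (fun s T => chi (pattern_tuple s T)).
  move=> s _ T TE' card_T; apply: chi_lt; apply/forallP => i; rewrite tnth_mktuple.
  apply: (fsubsetP TE'); rewrite -(mem_sort leq) mem_nth // size_sort.
  by rewrite card_T ltn_ord.
set sY := sort leq Y; set tail := drop p sY.
have sY_ltn : sorted ltn sY := sorted_ltn_sort_fset Y.
have size_sY : size sY = (p + k)%N by rewrite size_sort -card_Y.
set E := [fset t in take p sY].
have EY e : e \in E -> e \in Y by rewrite inE => /mem_take; rewrite mem_sort.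
exists E; first split.
- by apply/fsubsetP => e /EY /(fsubsetP YE').
- rewrite card_fseq undup_id ?take_uniq ?sort_uniq ?fset_uniq //.
  by rewrite size_takel // size_sY leq_addr.
have tail_ltn : sorted ltn tail.
  by apply: subseq_sorted sY_ltn; [exact: ltn_trans | exact: drop_subseq].
have tail_size : k <= size tail by rewrite size_drop size_sY addKn.
have lt_tail (z : k.-tuple nat) : cube E z -> forall v t, v \in z -> t \in tail -> v < t.
  move=> /forallP zE v t /tnthP[i ->]; move: (zE i); rewrite inE.
  have : pairwise ltn (take p sY ++ tail) by rewrite cat_take_drop -(sorted_pairwise ltn_trans).
  by rewrite pairwise_cat => /and3P[/allrelP lt _ _]; apply: lt.
move=> x y xE yE eq_xy; have [c_x hom_x] := hom (pattern x) (mem_enum _ _).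
have chi_E (z : k.-tuple nat) : cube E z -> pattern z = pattern x -> chi z = c_x.
  move=> zE pat_z; rewrite -(pattern_tuple_support tail_ltn tail_size (lt_tail z zE)) pat_z.
  apply: hom_x; last exact: card_support_set tail_ltn tail_size (lt_tail z zE).
  apply/fsubsetP => t /in_support_set[/tnthP[i ->]|/mem_drop]; last by rewrite mem_sort.
  by have /forallP/(_ i)/EY := zE.
by rewrite (chi_E x) ?(chi_E y) ?(pattern_otype eq_xy).
Qed.

End OrderPatterns.

(** * Regressive values determined by the order type *)

Lemma cube_sub k (E E' : {fset nat}) (x : k.-tuple nat) : E `<=` E' -> cube E x -> cube E' x.
Proof. by move=> EE' /forallP xE; apply/forallP => i; apply: (fsubsetP EE'). Qed.

Lemma size_undup_map_le (T U V : eqType) (f : T -> U) (g : T -> V) (s : seq T) :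
  {in s &, forall a b, g a = g b -> f a = f b} ->
  size (undup (map f s)) <= size (undup (map g s)).
Proof.
elim: s => [//|a s IH] fg /=.
have {}IH : size (undup (map f s)) <= size (undup (map g s)).
  by apply: IH => u v us vs; apply: fg; rewrite inE ?us ?vs orbT.
case: ifP => [_|/negbT fa_new]; first by case: ifP => // _; apply: leqW.
suff -> : g a \in map g s = false by [].
apply/negbTE/mapP => -[b bs ga_gb]; move/mapP: fa_new; apply; exists b => //.
by apply: fg; rewrite ?inE ?bs ?eqxx ?orbT.
Qed.

Lemma card_imfset_le (T V W : choiceType) (X : {fset T}) (f : T -> V) (g : T -> W) :
  {in X &, forall x y, g x = g y -> f x = f y} -> #|` f @` X| <= #|` g @` X|.
Proof.
have imfset_seq (Z : choiceType) (h : T -> Z) : h @` X = [fset z in map h X].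
  by apply/fsetP => z; rewrite in_fset; apply/imfsetP/mapP => -[x xX ->]; exists x.
by move=> fg; rewrite !imfset_seq !card_fseq size_undup_map_le.
Qed.

Section RegressiveValues.
Variable k : nat.
Implicit Types (U : fasgn k) (A : {fset k.-tuple nat}) (E : {fset nat}).

Definition regressive U A (x : k.-tuple nat) := mxc (U A x) < mnc x.

Definition otype_determined U A E := forall x y, cube E x -> cube E y ->
  regressive U A x -> regressive U A y -> otype x = otype y -> U A x = U A y.

Definition concl_ot p (S : pred (k.-tuple nat)) U := exists A E,
  [/\ {subset A <= S}, #|` E| = p, (forall x, cube E x -> x \in A) & otype_determined U A E].

Lemma regvalsP U A E v :
  reflect (exists2 x, x \in A & [/\ cube E x, regressive U A x & v = U A x])
          (v \in regvals U A E).
Proof.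
apply: (iffP idP) => [/imfsetP[x /= /[!inE] /andP[xA /andP[xE reg_x]] ->]|[x xA [xE reg_x ->]]].
  by exists x.
by apply/imfsetP; exists x; rewrite //= inE xA xE.
Qed.

Lemma card_regvals_ot U A E : otype_determined U A E -> #|` regvals U A E| <= ot k.
Proof.
move=> U_ot; set X := [fset x in A | cube E x && regressive U A x].
have -> : regvals U A E = U A @` X.
  apply/fsetP => v; apply/regvalsP/imfsetP => [[x xA [xE reg_x ->]]|[x /= /[!inE] ]].
    by exists x; rewrite //= !inE xA xE.
  by move=> /andP[xA /andP[xE reg_x]] ->; exists x.
apply: leq_trans (card_imfset_le (g := @otype k) _) _.
  by move=> x y /[!inE] /andP[_ /andP[xE reg_x]] /andP[_ /andP[yE reg_y]]; apply: U_ot.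
rewrite /ot -card_finset; apply: fsubset_leq_card; apply/fsubsetP => t /imfsetP[x _ ->].
by rewrite !inE; apply/asboolP; exists x.
Qed.

Lemma concl_of_concl_ot p S U : concl_ot p S U -> concl p (ot k) S U.
Proof.
by move=> [A [E [AS card_E EA U_ot]]]; exists A, E; split=> //; apply: card_regvals_ot.
Qed.

(* If [U(A)] has at most [b] regressive values on a large cube, colour [x] by the index of
   its regressive value; the canonical Ramsey theorem then shrinks the cube so that the
   colour, hence the value, depends only on the order type. *)
Lemma canonical_refinement p b : exists2 P, 0 < P &
  forall S U, concl P b S U -> concl_ot p S U.
Proof.
have [P HP] := ramsey_order_type k b.+1 p.
exists P.+1 => // S U [A [E' [AS card_E' E'A card_R]]].
set R := regvals U A E'.
have in_R x : x \in A -> cube E' x -> regressive U A x -> U A x \in R.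
  by move=> xA xE' reg_x; apply/regvalsP; exists x.
pose chi x := if (x \in A) && regressive U A x then index (U A x) R else b.
have chi_lt x : cube E' x -> chi x < b.+1.
  rewrite /chi => xE'; case: ifP => [/andP[xA reg_x]|//].
  have idx_lt : index (U A x) R < size R by rewrite index_mem in_R.
  exact: leqW (leq_trans idx_lt card_R).
have [|E [EE' card_E] chi_ot] := HP E' _ chi chi_lt; first by rewrite card_E'.
exists A, E; split=> // [x /(cube_sub EE') /E'A //|x y xE yE reg_x reg_y eq_xy].
have xE' := cube_sub EE' xE; have yE' := cube_sub EE' yE.
have := chi_ot x y xE yE eq_xy; rewrite /chi (E'A x xE') (E'A y yE') reg_x reg_y /=.
by move=> /(congr1 (nth (U A x) R)); rewrite !nth_index ?in_R ?E'A.
Qed.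

End RegressiveValues.

Lemma PropA_ot lt b : PropA lt b -> PropA lt ot.
Proof.
move=> propA k p k0 p0 U faU decU; have [P P0 refine] := canonical_refinement k p (b k).
by apply/concl_of_concl_ot/refine/propA.
Qed.

Lemma PropB_ot lt b : PropB lt b -> PropB lt ot.
Proof.
move=> propB k p k0 p0; have [P P0 refine] := canonical_refinement k p (b k).
have [m Hm] := propB k P k0 P0.
by exists m => n mn U faU decU; apply/concl_of_concl_ot/refine/Hm.
Qed.

Lemma PropC_ot b : PropC b -> PropC ot.
Proof.
move=> propC k p k0 p0 lt1 lt2 up1 up2 U faU decU.
have [P P0 refine] := canonical_refinement k p (b k).
exact/concl_of_concl_ot/refine/(propC k P k0 P0 lt1 lt2 up1 up2 U faU decU).
Qed.

Lemma PropD_ot b : PropD b -> PropD ot.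
Proof.
move=> propD k p k0 p0; have [P P0 refine] := canonical_refinement k p (b k).
have [m Hm] := propD k P k0 P0; exists m => n mn lt1 lt2 up1 up2 U faU decU.
exact/concl_of_concl_ot/refine/(Hm n mn lt1 lt2 up1 up2 U faU decU).
Qed.

(** * Lifting [N^k] to [N^(k+1)] *)

Lemma mnc_le_mxc k (x : k.-tuple nat) : mnc x <= mxc x.
Proof. by rewrite /mnc; elim/big_rec: _ => // i v _; apply: leq_trans (geq_minr _ _). Qed.

Lemma lt_mxc k (x : k.-tuple nat) a : (a < mxc x) = [exists j, a < tnth x j].
Proof.
apply/idP/idP => [|/existsP[j lt_a]]; last exact: leq_trans lt_a (le_mxc x j).
apply: contraTT => /existsPn a_ge; rewrite -leqNgt.
by apply/bigmax_leqP => j _; rewrite leqNgt a_ge.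
Qed.

Lemma mxc_attained k (x : k.-tuple nat) : 0 < k -> exists i, mxc x = tnth x i.
Proof.
rewrite -[k in 0 < k]card_ord => k0.
by have [i max_i] := @eq_bigmax _ (fun i => tnth x i) k0; exists i.
Qed.

Section HashLift.
Variable k : nat.
Implicit Types (x y : k.-tuple nat) (z : k.+1.-tuple nat).

(* [x |-> (|x|, x)] turns the comparison of greatest coordinates into a lexicographic one. *)
Definition hlift x : k.+1.-tuple nat := cons_tuple (mxc x) x.

Definition is_hlift z := z == hlift (behead_tuple z).

Definition unlift_set (A : {fset k.+1.-tuple nat}) : {fset k.-tuple nat} :=
  [fset behead_tuple z | z in A & is_hlift z].

Lemma hliftK x : behead_tuple (hlift x) = x.
Proof. exact: val_inj. Qed.

Lemma is_hlift_hlift x : is_hlift (hlift x).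
Proof. by rewrite /is_hlift hliftK. Qed.

Lemma hlift_inj : injective hlift.
Proof. by move=> x y /(congr1 (@behead_tuple k.+1 nat)); rewrite !hliftK. Qed.

Lemma in_unlift_set A x : (x \in unlift_set A) = (hlift x \in A).
Proof.
apply/imfsetP/idP => [[z /= /[!inE] /andP[zA /eqP z_lift] ->]|xA]; first by rewrite -z_lift.
by exists (hlift x); rewrite ?hliftK //= inE xA is_hlift_hlift.
Qed.

Lemma unlift_setU1 A z :
  unlift_set (z |` A) = if is_hlift z then behead_tuple z |` unlift_set A else unlift_set A.
Proof.
apply/fsetP => x; rewrite in_unlift_set in_fset1U; case: ifP => z_lift.
  by rewrite in_fset1U in_unlift_set (eqP z_lift) (inj_eq hlift_inj) hliftK.
by case: eqP => [x_z|_]; rewrite ?in_unlift_set //; move: z_lift; rewrite -x_z is_hlift_hlift.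
Qed.

Lemma mxc_hlift x : mxc (hlift x) = mxc x.
Proof.
rewrite {1}/mxc big_ord_recl tnth0; under eq_bigr do rewrite tnthS.
by rewrite maxnn.
Qed.

Lemma mnc_hlift x : mnc (hlift x) = mnc x.
Proof.
rewrite {1}/mnc mxc_hlift big_ord_recl tnth0; under eq_bigr do rewrite tnthS.
exact/minn_idPr/mnc_le_mxc.
Qed.

Lemma cube_hlift E x : 0 < k -> cube E x -> cube E (hlift x).
Proof.
move=> k0 /forallP xE; apply/forallP => i.
case: (unliftP ord0 i) => [j|] ->; first by rewrite tnthS.
by rewrite tnth0; have [j ->] := mxc_attained x k0.
Qed.

Lemma otype_hlift x y : otype x = otype y -> otype (hlift x) = otype (hlift y).
Proof.
move=> /otype_ltE eq_lt; apply/ffunP => -[i j]; rewrite !ffunE /=.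
case: (unliftP ord0 i) => [i'|] ->; case: (unliftP ord0 j) => [j'|] ->;
  rewrite ?tnthS ?tnth0 ?ltnn ?eq_lt //.
- by rewrite !lt_mxc; apply: eq_existsb => l; rewrite eq_lt.
- by rewrite !ltnNge !le_mxc.
Qed.

Lemma lex_lt_hlift x y : hash_lt k x y -> lex_lt k.+1 (hlift x) (hlift y).
Proof. by move=> lt_xy; apply/lex_ltP; exists ord0; split=> [j|]; rewrite ?ltn0 ?tnth0. Qed.

Definition hlift_fasgn (U : fasgn k) : fasgn k.+1 :=
  fun A z => if is_hlift z then hlift (U (unlift_set A) (behead_tuple z)) else z.

Lemma hlift_fasgnE U A x : hlift_fasgn U A (hlift x) = hlift (U (unlift_set A) x).
Proof. by rewrite /hlift_fasgn is_hlift_hlift hliftK. Qed.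

Lemma is_fa_hlift U : is_fa predT U -> is_fa predT (hlift_fasgn U).
Proof.
move=> faU A _ z zA; rewrite /hlift_fasgn; case: ifP => // /eqP z_lift.
by rewrite -in_unlift_set; apply: faU; rewrite // in_unlift_set -z_lift.
Qed.

Lemma ord_dec_hlift U : ord_dec predT (hash_lt k) (hash_lt k) U ->
  ord_dec predT (lex_lt k.+1) (lex_lt k.+1) (hlift_fasgn U).
Proof.
move=> decU A _ z _; rewrite /graph_sub /hlift_fasgn unlift_setU1.
case: ifP => z_lift; last by left.
have [sub|[y yA [lt_zy lt_U]]] := decU (unlift_set A) (fun _ _ => isT) (behead_tuple z) isT.
  left => y yA; case: ifP => // /eqP y_lift; congr hlift; apply: sub.
  by rewrite in_unlift_set -y_lift.
right; exists (hlift y); first by rewrite -in_unlift_set.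
rewrite is_hlift_hlift hliftK {1}(eqP z_lift).
by split; apply: lex_lt_hlift.
Qed.

Lemma concl_ot_unlift p U : 0 < k ->
  concl_ot p predT (hlift_fasgn U) -> concl_ot p predT U.
Proof.
move=> k0 [A [E [_ card_E EA U_ot]]]; exists (unlift_set A), E; split=> //.
  by move=> x xE; rewrite in_unlift_set EA // cube_hlift.
move=> x y xE yE reg_x reg_y eq_xy; apply: hlift_inj; rewrite -!hlift_fasgnE.
have reg_hlift w : regressive U (unlift_set A) w ->
    regressive (hlift_fasgn U) A (hlift w).
  by rewrite /regressive hlift_fasgnE mxc_hlift mnc_hlift.
by apply: U_ot; rewrite ?cube_hlift ?reg_hlift //; apply: otype_hlift.
Qed.

End HashLift.

Lemma PropA_hash_of_lex b : PropA lex_lt b -> PropA hash_lt ot.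
Proof.
move=> propA k p k0 p0 U faU decU.
have [P P0 refine] := canonical_refinement k.+1 p (b k.+1).
apply/concl_of_concl_ot/(concl_ot_unlift k0)/refine.
exact: propA (is_fa_hlift faU) (ord_dec_hlift decU).
Qed.

(** * Compactness *)

Definition unbounded (I : nat -> Prop) := forall M, exists2 m, M <= m & I m.

Lemma unbounded_fiber (I : nat -> Prop) (q : nat -> nat) B :
  unbounded I -> (forall m, I m -> q m < B) -> exists v, unbounded (fun m => I m /\ q m = v).
Proof.
elim: B I => [|B IH] I I_unb q_lt; first by have [m _ /q_lt] := I_unb 0.
have [|fib_B] := pselect (unbounded (fun m => I m /\ q m = B)); first by exists B.
have [M M_fib] : exists M, forall m, M <= m -> I m -> q m <> B.
  apply: contra_notP fib_B => no_M M; apply: contra_notP no_M => no_m.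
  by exists M => m Mm Im qB; apply: no_m; exists m.
have [||v v_unb] := IH (fun m => I m /\ M <= m).
- move=> M'; have [m] := I_unb (maxn M M'); rewrite geq_max => /andP[Mm M'm] Im.
  by exists m.
- move=> m [Im Mm]; have := q_lt m Im; rewrite ltnS leq_eqVlt => /orP[/eqP qB|//].
  by case: (M_fib m Mm Im qB).
by exists v => M'; have [m M'm [[Im _] qv]] := v_unb M'; exists m.
Qed.

Lemma unbounded_stabilize (T : eqType) (L : seq T) (Q : T -> nat -> nat) B (I : nat -> Prop) :
  unbounded I -> (forall t m, I m -> Q t m < B) ->
  exists I' : nat -> Prop, [/\ unbounded I', (forall m, I' m -> I m) &
    forall t, t \in L -> forall m m', I' m -> I' m' -> Q t m = Q t m'].
Proof.
elim: L I => [|t L IH] I I_unb Q_lt; first by exists I.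
have [v v_unb] := unbounded_fiber I_unb (fun m Im => Q_lt t m Im).
have [I' [I'_unb I'_sub Q_const]] := IH _ v_unb (fun t' m Im => Q_lt t' m Im.1).
exists I'; split=> // [m /I'_sub[] //|t'].
rewrite inE => /orP[/eqP -> | t'L] m m' I'm I'm'; last exact: Q_const.
by have [_ ->] := I'_sub m I'm; have [_ ->] := I'_sub m' I'm'.
Qed.

Lemma inbox_le j n k x : j <= n -> inbox j k x -> inbox n k x.
Proof. by move=> jn /forallP x_lt; apply/forallP => i; apply: leq_trans (x_lt i) jn. Qed.

Lemma inbox_mxc j k (x : k.-tuple nat) : mxc x < j -> inbox j k x.
Proof. by move=> lt_j; apply/forallP => i; apply: leq_ltn_trans (le_mxc x i) lt_j. Qed.

Section BoxEnumeration.
Variables k j : nat.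

Definition box_tuple (s : k.-tuple 'I_j) : k.-tuple nat := map_tuple val s.

Lemma box_tuple_inbox s : inbox j k (box_tuple s).
Proof. by apply/forallP => i; rewrite tnth_map ltn_ord. Qed.

Lemma inbox_box_tuple x : inbox j k x -> exists s, x = box_tuple s.
Proof.
move=> /forallP x_lt; exists [tuple Ordinal (x_lt i) | i < k].
by apply: eq_from_tnth => i; rewrite tnth_map tnth_mktuple.
Qed.

Definition box_fset (S : {set k.-tuple 'I_j}) : {fset k.-tuple nat} := box_tuple @` S.

Lemma inbox_box_fset (A : {fset k.-tuple nat}) :
  {subset A <= inbox j k} -> exists S, A = box_fset S.
Proof.
move=> A_box; exists [set s | box_tuple s \in A]; apply/fsetP => x.
apply/idP/imfsetP => [xA|[s /[!inE] sA -> //]].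
by have [s x_s] := inbox_box_tuple (A_box x xA); exists s; rewrite ?inE -?x_s.
Qed.

End BoxEnumeration.

Section Compactness.
Variables (k p bnd : nat) (N : nat -> nat).
Variables (L1 L2 : nat -> rel (k.-tuple nat)) (UU : nat -> fasgn k).
Hypotheses (le_N : forall m, m <= N m)
  (up1 : forall m, upward_on (inbox (N m) k) (L1 m))
  (up2 : forall m, upward_on (inbox (N m) k) (L2 m))
  (faU : forall m, is_fa (inbox (N m) k) (UU m))
  (decU : forall m, ord_dec (inbox (N m) k) (L1 m) (L2 m) (UU m))
  (no_concl : forall m, ~ concl p bnd (inbox (N m) k) (UU m)).

Definition agree j m m' :=
  (forall x y, inbox j k x -> inbox j k y -> L1 m x y = L1 m' x y /\ L2 m x y = L2 m' x y) /\
  (forall A y, {subset A <= inbox j k} -> y \in A -> UU m A y = UU m' A y).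

(* On the box [[j]^k] the data (L1 m, L2 m, UU m) ranges over a finite set. *)
Lemma agree_unbounded j I : 0 < j -> unbounded I -> (forall m, I m -> j <= m) ->
  exists I' : nat -> Prop, [/\ unbounded I', (forall m, I' m -> I m) &
    forall m m', I' m -> I' m' -> agree j m m'].
Proof.
move=> j0 I_unb I_ge.
pose pairs := enum {: k.-tuple 'I_j * k.-tuple 'I_j}.
have [I1 [I1_unb I1_sub L1_const]] := @unbounded_stabilize _ pairs
  (fun t m => L1 m (box_tuple t.1) (box_tuple t.2)) 2 I I_unb (fun t m _ => leq_b1 _).
have [I2 [I2_unb I2_sub L2_const]] := @unbounded_stabilize _ pairs
  (fun t m => L2 m (box_tuple t.1) (box_tuple t.2)) 2 I1 I1_unb (fun t m _ => leq_b1 _).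
pose coord (t : {set k.-tuple 'I_j} * k.-tuple 'I_j * 'I_k) m :=
  if box_tuple t.1.2 \in box_fset t.1.1
  then tnth (UU m (box_fset t.1.1) (box_tuple t.1.2)) t.2 else 0.
have coord_lt t m : I2 m -> coord t m < j.
  move=> I2m; rewrite /coord; case: ifP => // s_in.
  have jN : j <= N m by apply: leq_trans (I_ge m (I1_sub m (I2_sub m I2m))) (le_N m).
  have /imfsetP[s' _ ->] : UU m (box_fset t.1.1) (box_tuple t.1.2) \in box_fset t.1.1.
    by apply: faU => // z /imfsetP[s' _ ->]; apply: inbox_le jN (box_tuple_inbox s').
  by rewrite tnth_map ltn_ord.
have [I3 [I3_unb I3_sub U_const]] := @unbounded_stabilize _ (enum predT) coord j I2 I2_unb coord_lt.
exists I3; split=> [//|m /I3_sub /I2_sub /I1_sub //|m m' I3m I3m'].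
have I2m := I3_sub m I3m; have I2m' := I3_sub m' I3m'.
split=> [x y /inbox_box_tuple[s ->] /inbox_box_tuple[t ->]|A y A_box yA].
  have := L1_const (s, t) (mem_enum _ _) m m' (I2_sub m I2m) (I2_sub m' I2m').
  have := L2_const (s, t) (mem_enum _ _) m m' I2m I2m'.
  by case: (L1 m _ _); case: (L1 m' _ _); case: (L2 m _ _); case: (L2 m' _ _).
have [S A_S] := inbox_box_fset A_box; have [s y_s] := inbox_box_tuple (A_box y yA).
subst A y; apply: eq_from_tnth => i.
by have := U_const (S, s, i) (mem_enum _ _) m m' I3m I3m'; rewrite /coord /= yA.
Qed.

Definition agree_refinement j (I I' : nat -> Prop) := [/\ unbounded I',
  (forall m, I' m -> I m /\ j <= m) & forall m m', I' m -> I' m' -> agree j m m'].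

Definition refine_step j I := epsilon (inhabits I) (agree_refinement j I).

Fixpoint chain j := if j is j'.+1 then refine_step j (chain j') else (fun _ => True).

Lemma chainS j : unbounded (chain j) -> agree_refinement j.+1 (chain j) (chain j.+1).
Proof.
move=> chain_unb; apply: epsilon_spec.
have chain_gt_unb : unbounded (fun m => chain j m /\ j < m).
  move=> M; have [m] := chain_unb (maxn M j.+1).
  by rewrite geq_max => /andP[Mm jm] cm; exists m.
have [I' [I'_unb I'_sub I'_agree]] :=
  agree_unbounded (ltn0Sn j) chain_gt_unb (fun m => @proj2 _ _).
by exists I'.
Qed.

Lemma chain_unbounded j : unbounded (chain j).
Proof. by elim: j => [M|j /chainS[]//]; exists M. Qed.

Lemma chain_sub j j' m : j' <= j -> chain j m -> chain j' m.
Proof.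
elim: j => [|j IH]; first by rewrite leqn0 => /eqP ->.
rewrite leq_eqVlt ltnS => /orP[/eqP -> //|j'j] cm; apply: IH => //.
by have [_ /(_ m cm)[]] := chainS (chain_unbounded j).
Qed.

Lemma chain_ge j m : chain j m -> j <= m.
Proof. by case: j => // j cm; have [_ /(_ m cm)[]] := chainS (chain_unbounded j). Qed.

Definition pick j := epsilon (inhabits 0) (chain j).

Lemma chain_pick j : chain j (pick j).
Proof. by apply: epsilon_spec; have [m _ cm] := chain_unbounded j 0; exists m. Qed.

Lemma agree_pick j j' m : 0 < j' -> j' <= j -> chain j m -> agree j' (pick j') m.
Proof.
case: j' => // j' _ j'j cm; have [_ _] := chainS (chain_unbounded j'); apply.
  exact: chain_pick.
exact: chain_sub j'j cm.
Qed.

Lemma inbox_chain j m x : chain j m -> mxc x < j -> inbox (N m) k x.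
Proof.
by move=> cm /inbox_mxc; apply: inbox_le; apply: leq_trans (chain_ge cm) (le_N m).
Qed.

(* The limit object sees a pair [x, y], resp. a set [A], in the first box containing it. *)
Definition level2 (x y : k.-tuple nat) := (maxn (mxc x) (mxc y)).+1.
Definition levelA (A : {fset k.-tuple nat}) := (\max_(a <- A) mxc a).+1.

Definition lim_L1 x y := L1 (pick (level2 x y)) x y.
Definition lim_L2 x y := L2 (pick (level2 x y)) x y.
Definition lim_U : fasgn k := fun A y => UU (pick (levelA A)) A y.

Lemma mxc_lt_levelA A a : a \in A -> mxc a < levelA A.
Proof. by move=> aA; rewrite ltnS (leq_bigmax_seq (F := @mxc k)). Qed.

Lemma levelA_sub A B : A `<=` B -> levelA A <= levelA B.
Proof.
move=> AB; rewrite ltnS; apply/bigmax_leqP_seq => a aA _.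
by rewrite -ltnS mxc_lt_levelA ?(fsubsetP AB).
Qed.

Lemma inbox_pick_levelA A x : x \in A -> inbox (N (pick (levelA A))) k x.
Proof. by move=> xA; apply: inbox_chain (chain_pick _) (mxc_lt_levelA xA). Qed.

Lemma lim_LE j m x y : level2 x y <= j -> chain j m ->
  lim_L1 x y = L1 m x y /\ lim_L2 x y = L2 m x y.
Proof.
move=> le_j cm; have [agree_L _] := agree_pick (ltn0Sn _) le_j cm.
by apply: agree_L; apply: inbox_mxc; rewrite ltnS ?leq_maxl ?leq_maxr.
Qed.

Lemma lim_UE j m A y : levelA A <= j -> chain j m -> y \in A -> lim_U A y = UU m A y.
Proof.
move=> le_j cm yA; have [_ agree_U] := agree_pick (ltn0Sn _) le_j cm.
by apply: agree_U => // z zA; apply/inbox_mxc/mxc_lt_levelA.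
Qed.

Lemma upward_lim (L : nat -> rel (k.-tuple nat)) (lim_L : rel (k.-tuple nat)) :
  (forall m, upward_on (inbox (N m) k) (L m)) ->
  (forall j m x y, level2 x y <= j -> chain j m -> lim_L x y = L m x y) ->
  upward_on predT lim_L.
Proof.
move=> upL lim_LE'.
have level2_le j x y : mxc x < j -> mxc y < j -> level2 x y <= j.
  by rewrite /level2 gtn_max => -> ->.
have lim_pick j x y : mxc x < j -> mxc y < j -> lim_L x y = L (pick j) x y.
  by move=> xj yj; apply: lim_LE' (level2_le _ _ _ xj yj) (chain_pick j).
have box j x : mxc x < j -> inbox (N (pick j)) k x := inbox_chain (chain_pick j).
split; first split.
- move=> x _; have xj : mxc x < (mxc x).+1 by [].
  by rewrite (lim_pick _ _ _ xj xj); have [[irr _] _] := upL (pick (mxc x).+1); apply/irr/box.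
- move=> x y z _ _ _; set j := (maxn (mxc x) (maxn (mxc y) (mxc z))).+1.
  have [xj yj zj] : [/\ mxc x < j, mxc y < j & mxc z < j].
    by rewrite !ltnS !leq_max !leqnn !orbT.
  rewrite !(lim_pick j) //; have [[_ tr] _] := upL (pick j).
  by apply: tr; apply: box.
move=> x y _ _ le_xy; set j := (maxn (mxc x) (mxc y)).+1.
have [xj yj] : mxc x < j /\ mxc y < j by rewrite !ltnS !leq_max !leqnn !orbT.
by rewrite (lim_pick j) //; have [_ up] := upL (pick j); apply: up => //; apply: box.
Qed.

Lemma is_fa_lim : is_fa predT lim_U.
Proof. by move=> A _ y yA; apply: faU => // z; apply: inbox_pick_levelA. Qed.

Lemma ord_dec_lim : ord_dec predT lim_L1 lim_L2 lim_U.
Proof.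
move=> A _ x _; set j := levelA (x |` A); have cm := chain_pick j.
have box z : z \in x |` A -> inbox (N (pick j)) k z := @inbox_pick_levelA _ z.
have AxA : A `<=` x |` A := fsubsetU1 x A.
have A_le : levelA A <= j := levelA_sub AxA.
have lvl2 a b : a \in x |` A -> b \in x |` A -> level2 a b <= j.
  by move=> aA bA; rewrite /level2 gtn_max !mxc_lt_levelA.
have [sub|[y yA [lt1 lt2]]] :=
  decU (A := A) (fun z zA => box z (fsubsetP AxA z zA)) (box x (fset1U1 _ _)).
  by left => y yA; rewrite (lim_UE A_le cm yA) (lim_UE (leqnn _) cm) ?sub ?(fsubsetP AxA).
have yxA := fsubsetP AxA y yA.
have UyA : UU (pick j) A y \in x |` A.
  by apply/(fsubsetP AxA)/faU => // z zA; apply/box/(fsubsetP AxA).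
have UyxA : UU (pick j) (x |` A) y \in x |` A by apply: faU.
right; exists y => //; rewrite (lim_UE A_le cm yA) (lim_UE (leqnn _) cm yxA).
have [-> _] := lim_LE (lvl2 _ _ (fset1U1 _ _) yxA) cm.
by have [_ ->] := lim_LE (lvl2 _ _ UyxA UyA) cm.
Qed.

Lemma not_concl_lim : ~ concl p bnd predT lim_U.
Proof.
move=> [A [E [_ card_E EA card_R]]]; apply: (no_concl (m := pick (levelA A))).
by exists A, E; split=> // z; apply: inbox_pick_levelA.
Qed.

Lemma counterexample_lim : exists lt1 lt2 (U : fasgn k), [/\ upward_on predT lt1,
  upward_on predT lt2, is_fa predT U, ord_dec predT lt1 lt2 U & ~ concl p bnd predT U].
Proof.
exists lim_L1, lim_L2, lim_U; split.
- by apply: upward_lim up1 _ => j m x y le_j cm; have [] := lim_LE le_j cm.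
- by apply: upward_lim up2 _ => j m x y le_j cm; have [] := lim_LE le_j cm.
- exact: is_fa_lim.
- exact: ord_dec_lim.
- exact: not_concl_lim.
Qed.

End Compactness.

Lemma PropD_of_PropC b : PropC b -> PropD b.
Proof.
move=> propC k p k0 p0; apply: contrapT => no_m.
have /choice[cex /all_and2[le_N /all_and5[up1 up2 faU decU no_concl]]] :
    forall m, exists c : nat * rel (k.-tuple nat) * rel (k.-tuple nat) * fasgn k,
    m <= c.1.1.1 /\ [/\ upward_on (inbox c.1.1.1 k) c.1.1.2, upward_on (inbox c.1.1.1 k) c.1.2,
      is_fa (inbox c.1.1.1 k) c.2, ord_dec (inbox c.1.1.1 k) c.1.1.2 c.1.2 c.2
      & ~ concl p (b k) (inbox c.1.1.1 k) c.2].
  move=> m; apply: contra_notP no_m => no_cex; exists m => n mn lt1 lt2 up1 up2 U faU decU.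
  by apply: contra_notP no_cex => not_concl; exists (n, lt1, lt2, U).
have [lt1 [lt2 [U [up1' up2' faU' decU' not_concl]]]] :=
  counterexample_lim le_N up1 up2 faU decU no_concl.
exact: not_concl (propC k p k0 p0 lt1 lt2 up1' up2' U faU' decU').
Qed.

Theorem theorem3p14 :
  (PropC kk ->
     PropA hash_lt kk /\ PropA lex_lt kk /\ PropB hash_lt kk /\ PropB lex_lt kk /\
     PropC kk /\ PropD kk) /\
  ((PropA hash_lt kk -> PropA hash_lt kk) /\ (PropA lex_lt kk -> PropA hash_lt kk) /\
   (PropB hash_lt kk -> PropA hash_lt kk) /\ (PropB lex_lt kk -> PropA hash_lt kk) /\
   (PropC kk -> PropA hash_lt kk) /\ (PropD kk -> PropA hash_lt kk)) /\
  ((PropA hash_lt kk <-> PropA hash_lt ot) /\ (PropA lex_lt kk <-> PropA lex_lt ot) /\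
   (PropB hash_lt kk <-> PropB hash_lt ot) /\ (PropB lex_lt kk <-> PropB lex_lt ot) /\
   (PropC kk <-> PropC ot) /\ (PropD kk <-> PropD ot)).
Proof.
have A_hash_of_C := PropA_of_PropC (fun k => upward_hash_lt predT).
have A_lex_of_C := PropA_of_PropC (fun k => upward_lex_lt predT).
have B_hash_of_D := PropB_of_PropD (fun k n => upward_hash_lt (inbox n k)).
have B_lex_of_D := PropB_of_PropD (fun k n => upward_lex_lt (inbox n k)).
have A_hash_of_A_lex (H : PropA lex_lt kk) := PropA_le ot_leq_kk (PropA_hash_of_lex H).
split; [|split].
- move=> propC; have propD := PropD_of_PropC propC.
  by split; [|split; [|split; [|split]]]; auto.
- split; [done|split; [exact: A_hash_of_A_lex|split; [exact: PropA_of_PropB|]]].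
  split; [by move=> /PropA_of_PropB /A_hash_of_A_lex|split; [exact: A_hash_of_C|]].
  by move=> /PropC_of_PropD /A_hash_of_C.
- split; first by split; [apply: PropA_ot | move=> /(PropA_le ot_leq_kk)].
  split; first by split; [apply: PropA_ot | move=> /(PropA_le ot_leq_kk)].
  split; first by split; [apply: PropB_ot | move=> /(PropB_le ot_leq_kk)].
  split; first by split; [apply: PropB_ot | move=> /(PropB_le ot_leq_kk)].
  split; first by split; [apply: PropC_ot | move=> /(PropC_le ot_leq_kk)].
  by split; [apply: PropD_ot | move=> /(PropD_le ot_leq_kk)].
Qed.
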